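(* Let $I$ be a monoid with identity $1$. For every object $A$ of $\mathrm{bACT}(I)$, the evaluation map $\mathrm{ev}^l_{\mathrm{Map}^l_I(A)}:\mathrm{Map}^l_I(\mathrm{Map}^l_I(A))\to\mathrm{Map}^l_I(A)$, $h\mapsto h(1)$, is a bijective $I$-equivariant map with $I$-equivariant inverse, and these maps form a natural isomorphism $\mathrm{Map}^l_I\circ\mathrm{Map}^l_I\Rightarrow\mathrm{Map}^l_I$. Likewise, $\mathrm{ev}^r_{\mathrm{Map}^r_I(A)}:\mathrm{Map}^r_I(\mathrm{Map}^r_I(A))\to\mathrm{Map}^r_I(A)$, $h\mapsto h(1)$, defines a natural isomorphism $\mathrm{Map}^r_I\circ\mathrm{Map}^r_I\Rightarrow\mathrm{Map}^r_I$.
   Context: Let $I$ be a monoid with operation $\otimes$. For a set $X$, $\mathrm{End}_l(X)$ denotes self-maps written on the left with product $f\circ g$ ($g$ first); $\mathrm{End}_r(X)$ denotes self-maps written on the right, $x\mapsto(x)f$, with $(x)(fg)=((x)f)g$. An $I$-set is a set $X$ with a pair $\xi=(\xi_l,\xi_r)$ of monoid homomorphisms $\xi_l:I\to\mathrm{End}_l(X)$, $\xi_r:I\to\mathrm{End}_r(X)$ with $(\xi_l(i)(x))\xi_r(j)=\xi_l(i)((x)\xi_r(j))$; $f:(X,\xi)\to(Y,\eta)$ is $I$-equivariant if $(f(\xi_l(i)(x)))\eta_r(i)=\eta_l(i)(f((x)\xi_r(i)))$ for all $i,x$. An $I$-set is invertible on one side if either $\xi_l(i)$ is bijective for all $i$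 or $\xi_r(i)$ is bijective for all $i$; $\mathrm{bACT}(I)$ is the category of $I$-sets that are products (componentwise action) of $I$-sets invertible on one side, with $I$-equivariant maps. For an $I$-set $(A,\alpha)$: $\mathrm{Map}^l_I(A)$ is the set of $f:I\to A$ with $(f(j))\alpha_r(i)=\alpha_l(i)(f(j\otimes i))$ for all $i,j$, with action $\theta_l(k)=\mathrm{id}$, $((f)\theta_r(k))(j)=f(k\otimes j)$; $\mathrm{Map}^r_I(A)$ is the set of $f:I\to A$ with $(f(i\otimes j))\alpha_r(i)=\alpha_l(i)(f(j))$ for all $i,j$, with action $(\vartheta_l(k)(f))(i)=f(i\otimes k)$, $\vartheta_r(k)=\mathrm{id}$. Both are functors via $u\mapsto(h\mapsto u\circ h)$. $\mathrm{ev}^l_A,\mathrm{ev}^r_A$ denote evaluation at $1$. *)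

From mathcomp Require Import ssreflect ssrfun ssrbool.
From Stdlib Require Import FunctionalExtensionality ProofIrrelevance.

Set Implicit Arguments. Unset Strict Implicit. Unset Printing Implicit Defensive.

Record monoid := Monoid {
  mcar :> Type;
  mop : mcar -> mcar -> mcar;
  mone : mcar;
  mopA : forall a b c, mop a (mop b c) = mop (mop a b) c;
  mop1l : forall a, mop mone a = a;
  mop1r : forall a, mop a mone = a }.

Section ISets.
Variable I : monoid.
Local Notation "a \o* b" := (mop a b) (at level 40, left associativity).
Local Notation one := (mone I).

(* xl i x = xi_l(i)(x) ; xr x i = (x)xi_r(i) *)
Definition is_Iset (X : Type) (xl : I -> X -> X) (xr : X -> I -> X) : Prop :=
  [/\ (forall x, xl one x = x),
      (forall i j x, xl (i \o* j) x = xl i (xl j x)),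
      (forall x, xr x one = x),
      (forall i j x, xr x (i \o* j) = xr (xr x i) j)
    & (forall i j x, xr (xl i x) j = xl i (xr x j))].

Record Iset := ISet {
  icar :> Type;
  actl : I -> icar -> icar;
  actr : icar -> I -> icar;
  actP : is_Iset actl actr }.

Definition equivariant (X Y : Iset) (f : X -> Y) : Prop :=
  forall (i : I) (x : X), actr (f (actl i x)) i = actl i (f (actr x i)).

Definition invertible_one_side (X : Iset) : Prop :=
  (forall i : I, bijective (@actl X i)) \/
  (forall i : I, bijective (fun x : X => actr x i)).

Section Prod.
Variables (K : Type) (X : K -> Iset).
Definition prod_car := forall k, X k.
Definition prod_actl (i : I) (x : prod_car) : prod_car := fun k => actl i (x k).
Definition prod_actr (x : prod_car) (i : I) : prod_car := fun k => actr (x k) i.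
Lemma prod_actP : is_Iset prod_actl prod_actr.
Proof.
split=> *; apply: functional_extensionality_dep => k;
  rewrite /prod_actl /prod_actr; case: (actP (X k)) => ? ? ? ? ?; by auto.
Qed.
Definition prod_Iset : Iset := ISet prod_actP.
End Prod.

Section Mapl.
Variable A : Iset.
Definition mapl_pred (f : I -> A) : Prop :=
  forall i j : I, actr (f j) i = actl i (f (j \o* i)).
Definition Mapl_car := {f : I -> A | mapl_pred f}.
Lemma mapl_shift_pred (f : Mapl_car) (k : I) :
  mapl_pred (fun j => proj1_sig f (k \o* j)).
Proof. by move=> i j; rewrite (proj2_sig f) mopA. Qed.
Definition mapl_actl (k : I) (f : Mapl_car) : Mapl_car := f.
Definition mapl_actr (f : Mapl_car) (k : I) : Mapl_car :=
  exist _ _ (mapl_shift_pred f k).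
Lemma Mapl_actP : is_Iset mapl_actl mapl_actr.
Proof.
split=> // *; apply: eq_sig_hprop; try (move=> *; apply: proof_irrelevance);
  apply: functional_extensionality => j /=; by rewrite ?mop1l ?mopA.
Qed.
Definition Mapl : Iset := ISet Mapl_actP.
End Mapl.

Section Mapr.
Variable A : Iset.
Definition mapr_pred (f : I -> A) : Prop :=
  forall i j : I, actr (f (i \o* j)) i = actl i (f j).
Definition Mapr_car := {f : I -> A | mapr_pred f}.
Lemma mapr_shift_pred (f : Mapr_car) (k : I) :
  mapr_pred (fun i => proj1_sig f (i \o* k)).
Proof. by move=> i j; rewrite -mopA (proj2_sig f). Qed.
Definition mapr_actl (k : I) (f : Mapr_car) : Mapr_car :=
  exist _ _ (mapr_shift_pred f k).
Definition mapr_actr (f : Mapr_car) (k : I) : Mapr_car := f.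
Lemma Mapr_actP : is_Iset mapr_actl mapr_actr.
Proof.
split=> // *; apply: eq_sig_hprop; try (move=> *; apply: proof_irrelevance);
  apply: functional_extensionality => j /=; by rewrite ?mop1r ?mopA.
Qed.
Definition Mapr : Iset := ISet Mapr_actP.
End Mapr.

Definition evl (A : Iset) (h : Mapl A) : A := proj1_sig h one.
Definition evr (A : Iset) (h : Mapr A) : A := proj1_sig h one.

(* action of the functors Map^l_I, Map^r_I on a map u, on underlying
   functions: h |-> u \o h *)
Definition mapfun (A B : Type) (u : A -> B) (h : I -> A) : I -> B := fun j => u (h j).

End ISets.

(* In Map^l_I(B) the left action is trivial, so the condition defining an
   element h of Map^l_I(Map^l_I(A)) reads h(j)·i = h(j ⊗ i): h is the orbit
   j ↦ h(1)·j of its value at 1.  Hence evaluation at 1 is inverted by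
   f ↦ (j ↦ f·j), and both maps are equivariant.  Naturality holds on the nose, both sides being u ∘ h(1); none
   of this uses that A is a product of one-side invertible I-sets. *)
From mathcomp Require Import ssreflect ssrfun ssrbool.
From Stdlib Require Import FunctionalExtensionality ProofIrrelevance.

Set Implicit Arguments. Unset Strict Implicit. Unset Printing Implicit Defensive.

Lemma sig_funext (T U : Type) (P : (T -> U) -> Prop) (f g : {h | P h}) :
  proj1_sig f =1 proj1_sig g -> f = g.
Proof.
move=> fg; apply: eq_sig_hprop; first by move=> *; exact: proof_irrelevance.
exact: functional_extensionality.
Qed.

Section MaplMapl.
Variables (I : monoid) (A : Iset I).

Lemma mapl_orbit_pred (f : Mapl A) :
  mapl_pred (A := Mapl A) (mapl_actr f).
Proof. by move=> i j; apply: sig_funext => x /=; rewrite mopA. Qed.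

Definition evl_inv (f : Mapl A) : Mapl (Mapl A) :=
  exist _ (mapl_actr f) (mapl_orbit_pred f).

Lemma mapl_mapl_orbit (H : Mapl (Mapl A)) (j : I) :
  proj1_sig H j = mapl_actr (evl H) j.
Proof. by have := proj2_sig H j (mone I); rewrite /= /mapl_actl mop1l. Qed.

Lemma evlK : cancel (@evl I (Mapl A)) evl_inv.
Proof. by move=> H; apply: sig_funext => j; rewrite [RHS]mapl_mapl_orbit. Qed.

Lemma evl_invK : cancel evl_inv (@evl I (Mapl A)).
Proof. by move=> f; apply: sig_funext => x /=; rewrite mop1l. Qed.

Lemma evl_equivariant : equivariant (@evl I (Mapl A)).
Proof.
by move=> i H; rewrite /= /mapl_actl mop1r mapl_mapl_orbit.
Qed.

Lemma evl_inv_equivariant : equivariant evl_inv.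
Proof.
move=> i f; apply: sig_funext => j /=.
by apply: sig_funext => x /=; rewrite mopA.
Qed.

End MaplMapl.

Section MaprMapr.
Variables (I : monoid) (A : Iset I).

Lemma mapr_orbit_pred (f : Mapr A) :
  mapr_pred (A := Mapr A) (fun j => mapr_actl j f).
Proof. by move=> i j; apply: sig_funext => x /=; rewrite mopA. Qed.

Definition evr_inv (f : Mapr A) : Mapr (Mapr A) :=
  exist _ (fun j => mapr_actl j f) (mapr_orbit_pred f).

Lemma mapr_mapr_orbit (H : Mapr (Mapr A)) (j : I) :
  proj1_sig H j = mapr_actl j (evr H).
Proof. by have := proj2_sig H j (mone I); rewrite /= /mapr_actr mop1r. Qed.

Lemma evrK : cancel (@evr I (Mapr A)) evr_inv.
Proof. by move=> H; apply: sig_funext => j; rewrite [RHS]mapr_mapr_orbit. Qed.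

Lemma evr_invK : cancel evr_inv (@evr I (Mapr A)).
Proof. by move=> f; apply: sig_funext => x /=; rewrite mop1r. Qed.

Lemma evr_equivariant : equivariant (@evr I (Mapr A)).
Proof.
by move=> i H; rewrite /= /mapr_actr mop1l mapr_mapr_orbit.
Qed.

Lemma evr_inv_equivariant : equivariant evr_inv.
Proof.
move=> i f; apply: sig_funext => j /=.
by apply: sig_funext => x /=; rewrite mopA.
Qed.

End MaprMapr.

Theorem mainTheorem9 (I : monoid) (K : Type) (X : K -> Iset I)
  (hX : forall k, invertible_one_side (X k)) :
  let A := prod_Iset X in
  [/\ bijective (@evl I (Mapl A)),
      equivariant (@evl I (Mapl A))
    & (exists g : Mapl A -> Mapl (Mapl A),
          [/\ cancel (@evl I (Mapl A)) g, cancel g (@evl I (Mapl A))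
            & equivariant g])]
  /\ [/\
      bijective (@evr I (Mapr A)),
      equivariant (@evr I (Mapr A))
    & (exists g : Mapr A -> Mapr (Mapr A),
          [/\ cancel (@evr I (Mapr A)) g, cancel g (@evr I (Mapr A))
            & equivariant g])]
  /\
  (* naturality with respect to every morphism u : A -> B of bACT(I) *)
  (forall (K' : Type) (Y : K' -> Iset I)
     (hY : forall k, invertible_one_side (Y k))
     (u : A -> prod_Iset Y), equivariant u ->
     (forall H : Mapl (Mapl A),
        (fun j => mapfun u (proj1_sig (proj1_sig H j))) (mone I)
        = mapfun u (proj1_sig (evl H))) /\
     (forall H : Mapr (Mapr A),
        (fun j => mapfun u (proj1_sig (proj1_sig H j))) (mone I)
        = mapfun u (proj1_sig (evr H)))).
Proof.
move=> A; split; last split; last by [].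
- split; first exact: Bijective (@evlK I A) (@evl_invK I A).
  + exact: evl_equivariant.
  + by exists (@evl_inv I A); split; [exact: evlK | exact: evl_invK |
      exact: evl_inv_equivariant].
- split; first exact: Bijective (@evrK I A) (@evr_invK I A).
  + exact: evr_equivariant.
  + by exists (@evr_inv I A); split; [exact: evrK | exact: evr_invK |
      exact: evr_inv_equivariant].
Qed.
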